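(* For every integer $n\ge1$, the Wang shift $\Omega_n$ is aperiodic, i.e., $\Omega_n$ is nonempty and no configuration $x\in\Omega_n$ satisfies $\sigma^{\mathbf k}(x)=x$ for a nonzero vector $\mathbf k\in\mathbb{Z}^2$.
   Context: Fix an integer $n\ge1$. Let $V_n=\{(v_0,v_1,v_2)\in\mathbb{Z}^3: 0\le v_0\le v_1\le 1,\ v_1\le v_2\le n+1\}$; write $(v_0,v_1,v_2)$ as the word $v_0v_1v_2$. A Wang tile is a quadruple $t=(a,b,c,d)$ of labels with $\mathrm{RIGHT}(t)=a$, $\mathrm{TOP}(t)=b$, $\mathrm{LEFT}(t)=c$, $\mathrm{BOTTOM}(t)=d$. For $t=(a,b,c,d)$ let $\hat t=(b,a,d,c)$ and $\hat S=\{\hat t: t\in S\}$. Define (tiles written as (right, top, left, bottom)): $W_n=\{(11(i+1),11(j+1),11i,11j):1\le i,j\le n\}$; $b_n^i=(00(i+1),111,00i,11n)$, $B_n=\{b_n^i:0\le i\le n-1\}$; $g_n^i=(01(i+1),111,00i,11(n+1))$, $G_n=\{g_n^i:0\le i\le n\}$; $y_n^i=(01(i+1),112,01i,11(n+1))$, $Y_n=\{y_n^i:1\le i\le n\}$; junction tiles $j_n^{k,l,r,s}=((0,k,l),(0,r,s),(0,s,r+n),(0,l,k+n))$ for $(k,l),(r,s)\in\{(0,0),(0,1),(1,1)\}$; $J_n$ is the set of these 9 tiles minus $j_n^{0,0,1,1}$ and $j_n^{1,1,0,0}$. $\mathcal{T}_n=W_n\cup B_n\cup G_n\cup Y_n\cup\hat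 B_n\cup\hat G_n\cup\hat Y_n\cup J_n$. A configuration $x:\mathbb{Z}^2\to\mathcal{T}_n$ is valid if $\mathrm{RIGHT}(x(\mathbf m))=\mathrm{LEFT}(x(\mathbf m+\mathbf e_1))$ and $\mathrm{TOP}(x(\mathbf m))=\mathrm{BOTTOM}(x(\mathbf m+\mathbf e_2))$ for all $\mathbf m$; $\Omega_n$ is the set of valid configurations, with shift $(\sigma^{\mathbf k}x)_{\mathbf m}=x_{\mathbf m+\mathbf k}$. *)

From Stdlib Require Import ZArith.
Open Scope Z_scope.

Definition label := (Z * Z * Z)%type.
Definition lab (a b c : Z) : label := (a, b, c).

Definition in_V (n : Z) (v : label) : Prop :=
  let '(v0, v1, v2) := v in 0 <= v0 <= v1 /\ v1 <= 1 /\ v1 <= v2 <= n + 1.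

Definition tile := (label * label * label * label)%type.
Definition mk_tile (a b c d : label) : tile := (a, b, c, d).
Definition RIGHT (t : tile) : label := let '(a, _, _, _) := t in a.
Definition TOP (t : tile) : label := let '(_, b, _, _) := t in b.
Definition LEFT (t : tile) : label := let '(_, _, c, _) := t in c.
Definition BOTTOM (t : tile) : label := let '(_, _, _, d) := t in d.

Definition hat (t : tile) : tile := let '(a, b, c, d) := t in (b, a, d, c).

Definition in_W (n : Z) (t : tile) : Prop :=
  exists i j, 1 <= i <= n /\ 1 <= j <= n /\
    t = mk_tile (lab 1 1 (i+1)) (lab 1 1 (j+1)) (lab 1 1 i) (lab 1 1 j).

Definition in_B (n : Z) (t : tile) : Prop :=
  exists i, 0 <= i <= n - 1 /\
    t = mk_tile (lab 0 0 (i+1)) (lab 1 1 1) (lab 0 0 i) (lab 1 1 n).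

Definition in_G (n : Z) (t : tile) : Prop :=
  exists i, 0 <= i <= n /\
    t = mk_tile (lab 0 1 (i+1)) (lab 1 1 1) (lab 0 0 i) (lab 1 1 (n+1)).

Definition in_Y (n : Z) (t : tile) : Prop :=
  exists i, 1 <= i <= n /\
    t = mk_tile (lab 0 1 (i+1)) (lab 1 1 2) (lab 0 1 i) (lab 1 1 (n+1)).

Definition in_hat (S : tile -> Prop) (t : tile) : Prop :=
  exists s, S s /\ t = hat s.

Definition kl_ok (k l : Z) : Prop :=
  (k = 0 /\ l = 0) \/ (k = 0 /\ l = 1) \/ (k = 1 /\ l = 1).

Definition junction (n k l r s : Z) : tile :=
  mk_tile (lab 0 k l) (lab 0 r s) (lab 0 s (r + n)) (lab 0 l (k + n)).

Definition in_J (n : Z) (t : tile) : Prop :=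
  exists k l r s, kl_ok k l /\ kl_ok r s /\
    ~ (k = 0 /\ l = 0 /\ r = 1 /\ s = 1) /\
    ~ (k = 1 /\ l = 1 /\ r = 0 /\ s = 0) /\
    t = junction n k l r s.

Definition in_T (n : Z) (t : tile) : Prop :=
  in_W n t \/ in_B n t \/ in_G n t \/ in_Y n t \/
  in_hat (in_B n) t \/ in_hat (in_G n) t \/ in_hat (in_Y n) t \/ in_J n t.

Definition config := (Z * Z) -> tile.

Definition valid (n : Z) (x : config) : Prop :=
  (forall m, in_T n (x m)) /\
  (forall m1 m2, RIGHT (x (m1, m2)) = LEFT (x (m1 + 1, m2)) /\
                 TOP (x (m1, m2)) = BOTTOM (x (m1, m2 + 1))).

Definition shift (k : Z * Z) (x : config) : config :=
  fun m => x (fst m + fst k, snd m + snd k).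

Definition aperiodic (n : Z) : Prop :=
  (exists x, valid n x) /\
  (forall x k, valid n x -> k <> (0, 0) -> shift k x <> x).

From Pilot Require Import Defs.
From Stdlib Require Import ZArith Lia List Cantor.
From Stdlib Require Import Classical IndefiniteDescription FunctionalExtensionality.
Import ListNotations.
Open Scope Z_scope.

(* In a valid configuration the first coordinate of the labels sorts the columns
   and the rows into two kinds.  Along a kind-1 column the horizontal counter
   (third coordinate) grows by one from tile to tile while staying in [0, n + 1],
   so consecutive kind-0 columns are n or n + 1 apart, and likewise for rows; the
   kind-0 rows and columns cross at junction tiles and cut the plane into blocks.
   Reading each block as a single tile (its width gives the kind of the new
   column, the counters and the flags (second coordinates) along its sides give
   the rest of its labels) yields again a valid configuration, of a slightly
   larger tile set.  A period a of the column kinds of a configuration thus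
   induces a period of the column kinds of the derived one, equal to the number
   of kind-0 columns in a period; as not all columns have kind 0, this number
   is smaller than a, an infinite descent.  Conversely every tile of T_n expands
   into such a block, so iterating the expansion yields arbitrarily large valid
   squares, and a König compactness argument yields a valid configuration of
   the whole plane. *)

Definition v0 (L : label) : Z := fst (fst L).
Definition v1 (L : label) : Z := snd (fst L).
Definition v2 (L : label) : Z := snd L.

Lemma hat_hat t : hat (hat t) = t.
Proof. now destruct t as [[[a b] c] d]. Qed.

Lemma RIGHT_hat t : RIGHT (hat t) = TOP t. Proof. now destruct t as [[[a b] c] d]. Qed.
Lemma TOP_hat t : TOP (hat t) = RIGHT t. Proof. now destruct t as [[[a b] c] d]. Qed.
Lemma LEFT_hat t : LEFT (hat t) = BOTTOM t. Proof. now destruct t as [[[a b] c] d]. Qed.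
Lemma BOTTOM_hat t : BOTTOM (hat t) = LEFT t. Proof. now destruct t as [[[a b] c] d]. Qed.

Definition W_tile (i j : Z) : tile :=
  mk_tile (lab 1 1 (i + 1)) (lab 1 1 (j + 1)) (lab 1 1 i) (lab 1 1 j).

(* [strip_tile n a b i] is b_n^i, g_n^i or y_n^i for (a, b) = (0, 0), (0, 1) or (1, 1). *)
Definition strip_tile (n a b i : Z) : tile :=
  mk_tile (lab 0 b (i + 1)) (lab 1 1 (1 + a)) (lab 0 a i) (lab 1 1 (n + b)).

Definition in_T_nf (n : Z) (t : tile) : Prop :=
  (exists i j, 1 <= i <= n /\ 1 <= j <= n /\ t = W_tile i j) \/
  (exists a b i, 0 <= a <= b /\ b <= 1 /\ a <= i <= n - 1 + b /\
     (t = strip_tile n a b i \/ t = hat (strip_tile n a b i))) \/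
  (exists k l r s, 0 <= k <= l /\ l <= 1 /\ 0 <= r <= s /\ s <= 1 /\
     ~ (k = 0 /\ l = 0 /\ r = 1 /\ s = 1) /\ ~ (k = 1 /\ l = 1 /\ r = 0 /\ s = 0) /\
     t = junction n k l r s).

(* Dropping the constraint [a <= b] and the two junction exclusions gives a
   larger tile set; it is this set, not T_n, that is stable under desubstitution. *)
Definition relaxed_tile (n : Z) (t : tile) : Prop :=
  (exists i j, 1 <= i <= n /\ 1 <= j <= n /\ t = W_tile i j) \/
  (exists a b i, 0 <= a <= 1 /\ 0 <= b <= 1 /\ a <= i <= n - 1 + b /\
     (t = strip_tile n a b i \/ t = hat (strip_tile n a b i))) \/
  (exists k l r s, 0 <= k <= l /\ l <= 1 /\ 0 <= r <= s /\ s <= 1 /\ t = junction n k l r s).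

Ltac unfold_tiles :=
  cbv beta iota delta [v0 v1 v2 RIGHT LEFT TOP BOTTOM strip_tile W_tile junction mk_tile lab hat
                       fst snd] in *.
Ltac split_pairs :=
  repeat match goal with H : (_, _) = (_, _) |- _ => apply pair_equal_spec in H as [? ?] end.
Ltac tile_lia := unfold_tiles; split_pairs; lia.
Ltac tile_eq := unfold_tiles; repeat (apply pair_equal_spec; split); lia.

Lemma in_T_nf_iff n t : in_T n t <-> in_T_nf n t.
Proof.
  unfold in_T, in_T_nf, in_hat; split.
  - intros [H|[H|[H|[H|[H|[H|[H|H]]]]]]];
      try (destruct H as [s [[i [Hi ->]] ->]]); try (destruct H as (i & Hi & ->)).
    + left. destruct H as (i & j & ? & ? & ->). now exists i, j.
    + right; left. exists 0, 0, i. split; [lia|]. split; [lia|]. split; [lia|]. left. tile_eq.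
    + right; left. exists 0, 1, i. split; [lia|]. split; [lia|]. split; [lia|]. left. tile_eq.
    + right; left. exists 1, 1, i. split; [lia|]. split; [lia|]. split; [lia|]. left. tile_eq.
    + right; left. exists 0, 0, i. split; [lia|]. split; [lia|]. split; [lia|]. right. tile_eq.
    + right; left. exists 0, 1, i. split; [lia|]. split; [lia|]. split; [lia|]. right. tile_eq.
    + right; left. exists 1, 1, i. split; [lia|]. split; [lia|]. split; [lia|]. right. tile_eq.
    + right; right. destruct H as (k & l & r & s & ? & ? & ? & ? & ->). unfold kl_ok in *.
      exists k, l, r, s. repeat split; auto; lia.
  - intros [H|[H|H]].
    + left. destruct H as (i & j & ? & ? & ->). now exists i, j.
    + destruct H as (a & b & i & ? & ? & ? & Ht).
      assert (Hab : (a = 0 /\ b = 0) \/ (a = 0 /\ b = 1) \/ (a = 1 /\ b = 1)) by lia.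
      destruct Ht as [->| ->]; destruct Hab as [[-> ->]|[[-> ->]|[-> ->]]].
      * right; left. exists i. split; [lia|]. tile_eq.
      * do 2 right; left. exists i. split; [lia|]. tile_eq.
      * do 3 right; left. exists i. split; [lia|]. tile_eq.
      * do 4 right; left. exists (strip_tile n 0 0 i). split; [|reflexivity].
        exists i. split; [lia|]. tile_eq.
      * do 5 right; left. exists (strip_tile n 0 1 i). split; [|reflexivity].
        exists i. split; [lia|]. tile_eq.
      * do 6 right; left. exists (strip_tile n 1 1 i). split; [|reflexivity].
        exists i. split; [lia|]. tile_eq.
    + do 7 right. destruct H as (k & l & r & s & ? & ? & ? & ? & ? & ? & ->).
      exists k, l, r, s. unfold kl_ok. repeat split; auto; lia.
Qed.

Lemma in_T_nf_relaxed n t : in_T_nf n t -> relaxed_tile n t.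
Proof.
  intros [H|[H|H]]; [left; exact H| |].
  - right; left. destruct H as (a & b & i & ? & ? & ? & Ht). exists a, b, i. repeat split; auto; lia.
  - right; right. destruct H as (k & l & r & s & ? & ? & ? & ? & _ & _ & ->). now exists k, l, r, s.
Qed.

Ltac destruct_relaxed H :=
  destruct H as [(i & j & ? & ? & ->)
                | [(a & b & i & ? & ? & ? & [-> | ->])
                  | (k & l & r & s & ? & ? & ? & ? & ->)]].

Lemma relaxed_tile_hat n t : relaxed_tile n t -> relaxed_tile n (hat t).
Proof.
  intro H; destruct_relaxed H.
  - left. now exists j, i.
  - right; left. exists a, b, i. auto.
  - right; left. exists a, b, i. rewrite hat_hat. auto.
  - right; right. now exists r, s, k, l.
Qed.

Lemma relaxed_tile_in_V n t : 1 <= n -> relaxed_tile n t ->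
  in_V n (RIGHT t) /\ in_V n (TOP t) /\ in_V n (LEFT t) /\ in_V n (BOTTOM t).
Proof. intros Hn H; destruct_relaxed H; unfold in_V; tile_lia. Qed.

Lemma in_V_bounds n L : in_V n L -> 0 <= v0 L <= 1 /\ 0 <= v1 L <= 1 /\ 0 <= v2 L <= n + 1.
Proof. destruct L as [[a b] c]. unfold in_V, v0, v1, v2; simpl. lia. Qed.

Lemma relaxed_tile_kinds n t : relaxed_tile n t ->
  v0 (RIGHT t) = v0 (LEFT t) /\ v0 (TOP t) = v0 (BOTTOM t).
Proof. intro H; destruct_relaxed H; tile_lia. Qed.

Lemma relaxed_tile_counter n t : relaxed_tile n t -> v0 (TOP t) = 1 ->
  v2 (RIGHT t) = v2 (LEFT t) + 1.
Proof. intro H; destruct_relaxed H; tile_lia. Qed.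

Lemma relaxed_tile_junction n t : relaxed_tile n t -> v0 (LEFT t) = 0 -> v0 (TOP t) = 0 ->
  exists k l r s, 0 <= k <= l /\ l <= 1 /\ 0 <= r <= s /\ s <= 1 /\ t = junction n k l r s.
Proof. intro H; destruct_relaxed H; try tile_lia. intros _ _. now exists k, l, r, s. Qed.

Lemma relaxed_tile_strip n t : relaxed_tile n t -> v0 (LEFT t) = 0 -> v0 (TOP t) = 1 ->
  exists a b i, 0 <= a <= 1 /\ 0 <= b <= 1 /\ a <= i <= n - 1 + b /\ t = strip_tile n a b i.
Proof. intro H; destruct_relaxed H; try tile_lia. intros _ _. now exists a, b, i. Qed.

Lemma relaxed_tile_hat_strip n t : relaxed_tile n t -> v0 (LEFT t) = 1 -> v0 (TOP t) = 0 ->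
  exists a b i, 0 <= a <= 1 /\ 0 <= b <= 1 /\ a <= i <= n - 1 + b /\ t = hat (strip_tile n a b i).
Proof. intro H; destruct_relaxed H; try tile_lia. intros _ _. now exists a, b, i. Qed.

Definition relaxed_valid (n : Z) (x : config) : Prop :=
  (forall m, relaxed_tile n (x m)) /\
  (forall m1 m2, RIGHT (x (m1, m2)) = LEFT (x (m1 + 1, m2)) /\
                 TOP (x (m1, m2)) = BOTTOM (x (m1, m2 + 1))).

Lemma in_T_relaxed n t : in_T n t -> relaxed_tile n t.
Proof. intro H. apply in_T_nf_relaxed, in_T_nf_iff, H. Qed.

Lemma valid_relaxed n x : valid n x -> relaxed_valid n x.
Proof. intros [Ht Hm]. split; [|exact Hm]. intro m. apply in_T_relaxed, Ht. Qed.

Definition transpose (x : config) : config := fun m => hat (x (snd m, fst m)).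

Lemma transpose_involutive x : transpose (transpose x) = x.
Proof. apply functional_extensionality. intros [i j]. apply hat_hat. Qed.

Lemma relaxed_valid_transpose n x : relaxed_valid n x -> relaxed_valid n (transpose x).
Proof.
  intros [Ht Hm]. split.
  - intro m. apply relaxed_tile_hat, Ht.
  - intros i j. unfold transpose; simpl.
    rewrite RIGHT_hat, LEFT_hat, TOP_hat, BOTTOM_hat. now destruct (Hm j i).
Qed.

Definition col_kind (x : config) (m : Z) : Z := v0 (TOP (x (m, 0))).
Definition row_kind (x : config) (j : Z) : Z := col_kind (transpose x) j.

Section ValidConfiguration.
Variable n : Z.
Hypothesis Hn : 1 <= n.
Variable x : config.
Hypothesis Hx : relaxed_valid n x.

Lemma right_left m j : RIGHT (x (m, j)) = LEFT (x (m + 1, j)).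
Proof. apply (proj2 Hx). Qed.

Lemma top_bottom m j : TOP (x (m, j)) = BOTTOM (x (m, j + 1)).
Proof. apply (proj2 Hx). Qed.

Lemma tile_in_V m :
  in_V n (RIGHT (x m)) /\ in_V n (TOP (x m)) /\ in_V n (LEFT (x m)) /\ in_V n (BOTTOM (x m)).
Proof. apply relaxed_tile_in_V, (proj1 Hx); exact Hn. Qed.

Lemma col_kind_const m j : v0 (TOP (x (m, j))) = col_kind x m.
Proof.
  unfold col_kind. induction j using Z.peano_ind.
  - reflexivity.
  - rewrite <- IHj, (top_bottom m j), <- Z.add_1_r. apply (relaxed_tile_kinds n), (proj1 Hx).
  - rewrite <- IHj. replace j with (Z.pred j + 1) at 2 by lia. rewrite (top_bottom m (Z.pred j)).
    symmetry. apply (relaxed_tile_kinds n), (proj1 Hx).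
Qed.

Lemma col_kind_01 m : col_kind x m = 0 \/ col_kind x m = 1.
Proof. destruct (tile_in_V (m, 0)) as (_ & H & _). apply in_V_bounds in H. unfold col_kind. lia. Qed.

Lemma counter_across_kind1 j m0 d : 0 <= d -> (forall m, m0 <= m < m0 + d -> col_kind x m = 1) ->
  v2 (LEFT (x (m0 + d, j))) = v2 (LEFT (x (m0, j))) + d.
Proof.
  intro Hd. pattern d; apply natlike_ind; [intros _; rewrite Z.add_0_r; lia| |exact Hd].
  intros e He IH Hkind. rewrite <- Z.add_1_r, Z.add_assoc, <- right_left.
  rewrite (relaxed_tile_counter n _ (proj1 Hx _)).
  - rewrite IH; [lia|]. intros m Hm. apply Hkind. lia.
  - rewrite col_kind_const. apply Hkind. lia.
Qed.

(* The counter lies in [0, n + 1], so it cannot cross n + 2 kind-1 columns. *)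
Lemma kind0_column_window m : exists m', m <= m' <= m + n + 1 /\ col_kind x m' = 0.
Proof.
  apply NNPP. intro Hnone.
  assert (Hkind : forall m', m <= m' < m + (n + 2) -> col_kind x m' = 1).
  { intros m' Hm'. destruct (col_kind_01 m') as [H|H]; [|exact H].
    exfalso. apply Hnone. exists m'. split; [lia|exact H]. }
  pose proof (counter_across_kind1 0 m (n + 2) ltac:(lia) Hkind) as Hcount.
  destruct (tile_in_V (m, 0)) as (_ & _ & Hl & _).
  destruct (tile_in_V (m + (n + 2), 0)) as (_ & _ & Hl' & _).
  apply in_V_bounds in Hl, Hl'. lia.
Qed.

End ValidConfiguration.

Lemma row_kind_const n x m j : relaxed_valid n x -> v0 (LEFT (x (m, j))) = row_kind x j.
Proof.
  intro Hx. unfold row_kind.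
  rewrite <- (col_kind_const n (transpose x) (relaxed_valid_transpose n x Hx) j m).
  unfold transpose; simpl. rewrite TOP_hat. symmetry. apply (relaxed_tile_kinds n), (proj1 Hx).
Qed.

Lemma row_kind_01 n x j : 1 <= n -> relaxed_valid n x -> row_kind x j = 0 \/ row_kind x j = 1.
Proof. intros Hn Hx. apply (col_kind_01 n Hn), relaxed_valid_transpose, Hx. Qed.

Section Cells.
Variable n : Z.
Hypothesis Hn : 1 <= n.
Variable x : config.
Hypothesis Hx : relaxed_valid n x.

Lemma junction_at m j : col_kind x m = 0 -> row_kind x j = 0 ->
  exists k l r s, 0 <= k <= l /\ l <= 1 /\ 0 <= r <= s /\ s <= 1 /\ x (m, j) = junction n k l r s.
Proof.
  intros Hc Hr. apply relaxed_tile_junction; [apply Hx| |].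
  - now rewrite (row_kind_const n).
  - now rewrite (col_kind_const n).
Qed.

Lemma strip_at m j : col_kind x m = 1 -> row_kind x j = 0 ->
  exists a b i, 0 <= a <= 1 /\ 0 <= b <= 1 /\ a <= i <= n - 1 + b /\ x (m, j) = strip_tile n a b i.
Proof.
  intros Hc Hr. apply relaxed_tile_strip; [apply Hx| |].
  - now rewrite (row_kind_const n).
  - now rewrite (col_kind_const n).
Qed.

Lemma hat_strip_at m j : col_kind x m = 0 -> row_kind x j = 1 ->
  exists a b i, 0 <= a <= 1 /\ 0 <= b <= 1 /\ a <= i <= n - 1 + b /\
    x (m, j) = hat (strip_tile n a b i).
Proof.
  intros Hc Hr. apply relaxed_tile_hat_strip; [apply Hx| |].
  - now rewrite (row_kind_const n).
  - now rewrite (col_kind_const n).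
Qed.

Lemma kind0_row_window j : exists j', j <= j' <= j + n + 1 /\ row_kind x j' = 0.
Proof. apply (kind0_column_window n Hn), relaxed_valid_transpose, Hx. Qed.

Lemma adjacent_junctions m j : col_kind x m = 0 -> col_kind x (m + 1) = 0 -> row_kind x j = 0 ->
  n = 1 /\ v1 (BOTTOM (x (m, j))) = 1 /\ v1 (TOP (x (m + 1, j))) = 0.
Proof.
  intros Hm Hm' Hj. pose proof (right_left n x Hx m j) as Hadj.
  destruct (junction_at m j Hm Hj) as (k & l & r & s & ? & ? & ? & ? & E).
  destruct (junction_at (m + 1) j Hm' Hj) as (k' & l' & r' & s' & ? & ? & ? & ? & E').
  rewrite E, E' in *. tile_lia.
Qed.

Lemma adjacent_hat_strips m j : n = 1 -> col_kind x m = 0 -> col_kind x (m + 1) = 0 ->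
  row_kind x j = 1 -> v1 (BOTTOM (x (m, j))) = 0 ->
  v1 (TOP (x (m + 1, j))) = 0 /\ v2 (TOP (x (m + 1, j))) = 1 /\ v2 (BOTTOM (x (m + 1, j))) = 0.
Proof.
  intros Hn1 Hm Hm' Hj Hflag. pose proof (right_left n x Hx m j) as Hadj.
  destruct (hat_strip_at m j Hm Hj) as (a & b & i & ? & ? & ? & E).
  destruct (hat_strip_at (m + 1) j Hm' Hj) as (a' & b' & i' & ? & ? & ? & E').
  rewrite E, E' in *. tile_lia.
Qed.

(* If all columns had kind 0, then n = 1, every junction row would carry flags 1
   below and 0 above, and a row of kind 1 above flags 0 would carry flags 0 and
   counters 0 below and 1 above: no row can lie above a junction row. *)
Lemma exists_kind1_column : exists m, col_kind x m = 1.
Proof.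
  apply NNPP. intro Hnone.
  assert (Hall0 : forall m, col_kind x m = 0).
  { intro m. destruct (col_kind_01 n Hn x Hx m) as [H|H]; [exact H|]. exfalso. eauto. }
  assert (Hjrow : forall j, row_kind x j = 0 ->
            n = 1 /\ forall m, v1 (BOTTOM (x (m, j))) = 1 /\ v1 (TOP (x (m, j))) = 0).
  { intros j Hj. split; [apply (adjacent_junctions 0 j); auto|]. intro m. split.
    - apply (adjacent_junctions m j); auto.
    - replace m with (m - 1 + 1) by lia. apply (adjacent_junctions (m - 1) j); auto. }
  assert (Hhrow : forall j, row_kind x j = 1 -> n = 1 -> (forall m, v1 (TOP (x (m, j - 1))) = 0) ->
            forall m, v1 (TOP (x (m, j))) = 0 /\ v2 (TOP (x (m, j))) = 1 /\ v2 (BOTTOM (x (m, j))) = 0).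
  { intros j Hj Hn1 Hbelow m. replace m with (m - 1 + 1) by lia.
    apply adjacent_hat_strips; auto. replace j with (j - 1 + 1) by lia.
    rewrite <- (top_bottom n x Hx). apply Hbelow. }
  assert (Hup : forall j, (forall m, v1 (TOP (x (m, j))) = 0) -> row_kind x (j + 1) = 1).
  { intros j Htop. destruct (row_kind_01 n x (j + 1) Hn Hx) as [H|H]; [|exact H].
    destruct (Hjrow _ H) as [_ Hf]. specialize (Htop 0). specialize (Hf 0).
    rewrite (top_bottom n x Hx) in Htop. lia. }
  destruct (kind0_row_window 0) as (j & _ & Hj). destruct (Hjrow j Hj) as [Hn1 Hflags].
  assert (Hrow1 := Hhrow (j + 1) (Hup j (fun m => proj2 (Hflags m))) Hn1).
  replace (j + 1 - 1) with j in Hrow1 by lia. specialize (Hrow1 (fun m => proj2 (Hflags m))).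
  assert (Hrow2 := Hhrow (j + 1 + 1) (Hup (j + 1) (fun m => proj1 (Hrow1 m))) Hn1).
  replace (j + 1 + 1 - 1) with (j + 1) in Hrow2 by lia.
  destruct (Hrow2 (fun m => proj1 (Hrow1 m)) 0) as (_ & _ & Hbottom).
  destruct (Hrow1 0) as (_ & Htop & _). rewrite (top_bottom n x Hx) in Htop. lia.
Qed.

End Cells.

Definition consecutive_kind0 (x : config) (p p' : Z) : Prop :=
  p < p' /\ col_kind x p = 0 /\ col_kind x p' = 0 /\ forall m, p < m < p' -> col_kind x m = 1.

Section Gaps.
Variable n : Z.
Hypothesis Hn : 1 <= n.
Variable x : config.
Hypothesis Hx : relaxed_valid n x.

Lemma counter_across_gap j p p' : consecutive_kind0 x p p' ->
  v2 (LEFT (x (p', j))) = v2 (RIGHT (x (p, j))) + (p' - p - 1).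
Proof.
  intros (Hlt & _ & _ & Hkind). rewrite (right_left n x Hx).
  replace p' with (p + 1 + (p' - p - 1)) at 1 by lia.
  apply (counter_across_kind1 n x Hx); [lia|]. intros m Hm. apply Hkind. lia.
Qed.

(* With g = p' - p - 1, the counters across the gap give g in [n - 1, n + 1] in
   a junction row and g in [n - 2, n] in a row of kind 1. *)
Lemma gap_width p p' : consecutive_kind0 x p p' -> p' - p - 1 = n - 1 \/ p' - p - 1 = n.
Proof.
  intro Hc. pose proof Hc as (_ & Hp & Hp' & _).
  destruct (kind0_row_window n Hn x Hx 0) as (j0 & _ & Hj0).
  destruct (exists_kind1_column n Hn (transpose x) (relaxed_valid_transpose n x Hx)) as (j1 & Hj1).
  fold (row_kind x j1) in Hj1.
  pose proof (counter_across_gap j0 p p' Hc) as Hcount0.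
  pose proof (counter_across_gap j1 p p' Hc) as Hcount1.
  destruct (junction_at n x Hx p j0 Hp Hj0) as (k & l & r & s & ? & ? & ? & ? & E1).
  destruct (junction_at n x Hx p' j0 Hp' Hj0) as (k' & l' & r' & s' & ? & ? & ? & ? & E2).
  destruct (hat_strip_at n x Hx p j1 Hp Hj1) as (a & b & i & ? & ? & ? & E3).
  destruct (hat_strip_at n x Hx p' j1 Hp' Hj1) as (a' & b' & i' & ? & ? & ? & E4).
  rewrite E1, E2 in Hcount0. rewrite E3, E4 in Hcount1. tile_lia.
Qed.

End Gaps.

Fixpoint sum_from (f : Z -> Z) (a : Z) (len : nat) : Z :=
  match len with O => 0 | S len' => f a + sum_from f (a + 1) len' end.

Lemma sum_from_last f a len : sum_from f a (S len) = sum_from f a len + f (a + Z.of_nat len).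
Proof.
  revert a. induction len as [|len IH]; intro a; simpl.
  - rewrite !Z.add_0_r. lia.
  - simpl in IH. rewrite IH.
    replace (a + 1 + Z.of_nat len) with (a + Z.pos (Pos.of_succ_nat len)) by lia. lia.
Qed.

Lemma sum_from_ext f g a len : (forall m, a <= m < a + Z.of_nat len -> f m = g m) ->
  sum_from f a len = sum_from g a len.
Proof.
  revert a. induction len as [|len IH]; intros a H; simpl; [reflexivity|].
  rewrite H, IH by (intros; try apply H; lia). reflexivity.
Qed.

Lemma sum_from_bounds f a len : (forall m, a <= m < a + Z.of_nat len -> 0 <= f m <= 1) ->
  0 <= sum_from f a len <= Z.of_nat len.
Proof.
  revert a. induction len as [|len IH]; intros a H; simpl; [lia|].
  pose proof (H a ltac:(lia)). pose proof (IH (a + 1) ltac:(intros; apply H; lia)). lia.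
Qed.

Lemma sum_from_add_const f g c a len : (forall m, a <= m < a + Z.of_nat len -> f m = g m + c) ->
  sum_from f a len = sum_from g a len + c * Z.of_nat len.
Proof.
  revert a. induction len as [|len IH]; intros a H; simpl; [lia|].
  rewrite H, IH by (intros; try apply H; lia). lia.
Qed.

Lemma sum_from_telescope f a len :
  sum_from f a len - sum_from (fun m => f (m + 1)) a len = f a - f (a + Z.of_nat len).
Proof.
  revert a. induction len as [|len IH]; intro a; simpl.
  - rewrite !Z.add_0_r. lia.
  - pose proof (IH (a + 1)) as H.
    replace (a + 1 + Z.of_nat len) with (a + Z.pos (Pos.of_succ_nat len)) in H by lia. lia.
Qed.

Definition zero_flags_left (x : config) (j p p' : Z) : Z :=
  sum_from (fun m => 1 - v1 (LEFT (x (m, j)))) (p + 1) (Z.to_nat (p' - p - 1)).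
Definition zero_flags_right (x : config) (j p p' : Z) : Z :=
  sum_from (fun m => 1 - v1 (RIGHT (x (m, j)))) (p + 1) (Z.to_nat (p' - p - 1)).

Section Strips.
Variable n : Z.
Hypothesis Hn : 1 <= n.
Variable x : config.
Hypothesis Hx : relaxed_valid n x.

Lemma flag_bounds m j : 0 <= v1 (LEFT (x (m, j))) <= 1 /\ 0 <= v1 (RIGHT (x (m, j))) <= 1.
Proof.
  destruct (tile_in_V n Hn x Hx (m, j)) as (Hr & _ & Hl & _).
  apply in_V_bounds in Hr, Hl. lia.
Qed.

Lemma zero_flags_bounds j p p' : p < p' ->
  0 <= zero_flags_left x j p p' <= p' - p - 1 /\ 0 <= zero_flags_right x j p p' <= p' - p - 1.
Proof.
  intro Hlt. unfold zero_flags_left, zero_flags_right.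
  split; (rewrite <- (Z2Nat.id (p' - p - 1)) at 3 by lia; apply sum_from_bounds;
          intros m _; pose proof (flag_bounds m j); lia).
Qed.

Lemma zero_flags_balance j p p' : p < p' ->
  zero_flags_left x j p p' - zero_flags_right x j p p' =
  v1 (LEFT (x (p', j))) - v1 (RIGHT (x (p, j))).
Proof.
  intro Hlt. unfold zero_flags_left, zero_flags_right.
  rewrite (sum_from_ext (fun m => 1 - v1 (RIGHT (x (m, j))))
                        (fun m => 1 - v1 (LEFT (x (m + 1, j))))).
  - rewrite sum_from_telescope, Z2Nat.id by lia. rewrite (right_left n x Hx).
    replace (p + 1 + (p' - p - 1)) with p' by lia. lia.
  - intros m _. now rewrite (right_left n x Hx).
Qed.

(* The last strip tile before [p'] receives the counter l + g - 1, where l leaves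
   [p] and g = p' - p - 1; its constraint [i <= n - 1 + b] bounds its right flag. *)
Lemma zero_flags_right_bound j p p' : row_kind x j = 0 -> consecutive_kind0 x p p' ->
  zero_flags_right x j p p' <= n - v2 (RIGHT (x (p, j))).
Proof.
  intros Hj Hc. pose proof Hc as (Hlt & Hp & _ & Hkind). unfold zero_flags_right.
  destruct (Z.eq_dec (p' - p - 1) 0) as [Hg|Hg].
  - rewrite Hg. destruct (junction_at n x Hx p j Hp Hj) as (k & l & r & s & ? & ? & ? & ? & ->).
    simpl. tile_lia.
  - replace (Z.to_nat (p' - p - 1)) with (S (Z.to_nat (p' - p - 2))) by lia. rewrite sum_from_last.
    pose proof (sum_from_bounds (fun m => 1 - v1 (RIGHT (x (m, j)))) (p + 1) (Z.to_nat (p' - p - 2))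
                  ltac:(intros m _; pose proof (flag_bounds m j); lia)).
    replace (p + 1 + Z.of_nat (Z.to_nat (p' - p - 2))) with (p' - 1) by lia.
    pose proof (counter_across_gap n x Hx j p p' Hc) as Hcount.
    replace p' with (p' - 1 + 1) in Hcount at 1 by lia. rewrite <- (right_left n x Hx) in Hcount.
    destruct (strip_at n x Hx (p' - 1) j ltac:(apply Hkind; lia) Hj) as (a & b & i & ? & ? & ? & E).
    rewrite E in Hcount |- *. tile_lia.
Qed.

(* Between two junction rows, the vertical counter of each strip column grows
   by one across each of the q' - q - 1 rows of kind 1 in between. *)
Lemma zero_flags_across_rows p p' q q' :
  consecutive_kind0 x p p' -> consecutive_kind0 (transpose x) q q' ->
  zero_flags_right x q' p p' = zero_flags_left x q p p' + (n - 1 - (q' - q - 1)) * (p' - p - 1).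
Proof.
  intros (Hlt & _ & _ & Hkind) Hr. pose proof Hr as (_ & Hq & Hq' & _).
  fold (row_kind x q) in Hq. fold (row_kind x q') in Hq'.
  unfold zero_flags_right, zero_flags_left.
  rewrite (sum_from_add_const _ (fun m => 1 - v1 (LEFT (x (m, q)))) (n - 1 - (q' - q - 1))).
  - rewrite Z2Nat.id by lia. lia.
  - intros m Hm. rewrite Z2Nat.id in Hm by lia.
    assert (Hm1 : col_kind x m = 1) by (apply Hkind; lia).
    pose proof (counter_across_gap n (transpose x) (relaxed_valid_transpose n x Hx) m q q' Hr)
      as Hcount.
    unfold transpose in Hcount; simpl in Hcount. rewrite LEFT_hat, RIGHT_hat in Hcount.
    destruct (strip_at n x Hx m q Hm1 Hq) as (a & b & i & ? & ? & ? & E).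
    destruct (strip_at n x Hx m q' Hm1 Hq') as (a' & b' & i' & ? & ? & ? & E').
    rewrite E, E' in *. tile_lia.
Qed.

End Strips.

Lemma strip_constraints n x j p p' : 1 <= n -> relaxed_valid n x ->
  row_kind x j = 0 -> consecutive_kind0 x p p' ->
  let g := p' - p - 1 in
  let k := v1 (RIGHT (x (p, j))) in let l := v2 (RIGHT (x (p, j))) in
  let s := v1 (LEFT (x (p', j))) in let e := v2 (LEFT (x (p', j))) in
  let σ := zero_flags_left x j p p' in let ω := zero_flags_right x j p p' in
  e = l + g /\ σ - ω = s - k /\ 0 <= σ <= g /\ 0 <= ω <= g /\ ω <= n - l.
Proof.
  intros Hn Hx Hj Hc. pose proof Hc as (Hlt & _).
  split; [apply (counter_across_gap n x Hx j p p' Hc)|].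
  split; [apply (zero_flags_balance n x Hx j p p' Hlt)|].
  split; [|split]; [apply (zero_flags_bounds n Hn x Hx j p p' Hlt)..|].
  apply (zero_flags_right_bound n Hn x Hx); assumption.
Qed.

(* A strip of row [j] between consecutive junction columns [p < p'] encodes one
   label of the derived configuration: [v0] is read off the width of the gap,
   [v1] off the counter leaving the junction at [p], and [v2] off the number of
   0-flags along the strip. *)
Definition derived_label (n : Z) (x : config) (j p p' : Z) : label :=
  let g := p' - p - 1 in
  lab (n - g) (n - g + 1 - v2 (RIGHT (x (p, j))))
      (zero_flags_left x j p p' + 1 - Z.max (v1 (RIGHT (x (p, j)))) (v1 (LEFT (x (p', j)))) + n - g).

Definition derived_tile (n : Z) (x : config) (p p' q q' : Z) : tile :=
  mk_tile (derived_label n (transpose x) p' q q') (derived_label n x q' p p')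
          (derived_label n (transpose x) p q q') (derived_label n x q p p').

Lemma derived_tile_relaxed n x p p' q q' : 1 <= n -> relaxed_valid n x ->
  consecutive_kind0 x p p' -> consecutive_kind0 (transpose x) q q' ->
  relaxed_tile n (derived_tile n x p p' q q').
Proof.
  intros Hn Hx Hc Hr.
  assert (Hx' := relaxed_valid_transpose n x Hx).
  assert (Hc' : consecutive_kind0 (transpose (transpose x)) p p') by now rewrite transpose_involutive.
  assert (Hp : row_kind (transpose x) p = 0 /\ row_kind (transpose x) p' = 0)
    by (unfold row_kind; rewrite transpose_involutive; split; apply Hc).
  pose proof Hc as (_ & Hcp & Hcp' & _). pose proof Hr as (_ & Hq & Hq' & _).
  fold (row_kind x q) in Hq. fold (row_kind x q') in Hq'.
  pose proof (gap_width n Hn x Hx p p' Hc) as Hg.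
  pose proof (gap_width n Hn (transpose x) Hx' q q' Hr) as Hh.
  pose proof (strip_constraints n x q p p' Hn Hx Hq Hc) as Hbottom.
  pose proof (strip_constraints n x q' p p' Hn Hx Hq' Hc) as Htop.
  pose proof (strip_constraints n (transpose x) p q q' Hn Hx' (proj1 Hp) Hr) as Hleft.
  pose proof (strip_constraints n (transpose x) p' q q' Hn Hx' (proj2 Hp) Hr) as Hright.
  pose proof (zero_flags_across_rows n x Hx p p' q q' Hc Hr) as Hcross.
  pose proof (zero_flags_across_rows n (transpose x) Hx' q q' p p' Hr Hc') as Hcross'.
  cbv zeta in *. unfold derived_tile, derived_label. unfold transpose in *; cbn [fst snd] in *.
  rewrite ?RIGHT_hat, ?LEFT_hat, ?TOP_hat, ?BOTTOM_hat in *.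
  destruct (junction_at n x Hx p q Hcp Hq) as (k0 & l0 & r0 & s0 & ? & ? & ? & ? & E0).
  destruct (junction_at n x Hx p' q Hcp' Hq) as (k1 & l1 & r1 & s1 & ? & ? & ? & ? & E1).
  destruct (junction_at n x Hx p q' Hcp Hq') as (k2 & l2 & r2 & s2 & ? & ? & ? & ? & E2).
  destruct (junction_at n x Hx p' q' Hcp' Hq') as (k3 & l3 & r3 & s3 & ? & ? & ? & ? & E3).
  rewrite E0, E1, E2, E3 in *. unfold_tiles.
  set (iL := zero_flags_left _ p q q' + 1 - Z.max r0 l2 + n - (q' - q - 1)).
  set (jB := zero_flags_left _ q p p' + 1 - Z.max k0 s1 + n - (p' - p - 1)).
  unfold relaxed_tile. destruct Hg as [Hg|Hg]; destruct Hh as [Hh|Hh].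
  - left. exists iL, jB. split; [lia|]. split; [lia|]. tile_eq.
  - right; left. exists (n - (q' - q - 1) + 1 - s0), (n - (q' - q - 1) + 1 - s1), iL.
    split; [lia|]. split; [lia|]. split; [lia|]. left. tile_eq.
  - right; left. exists (n - (p' - p - 1) + 1 - l0), (n - (p' - p - 1) + 1 - l2), jB.
    split; [lia|]. split; [lia|]. split; [lia|]. right. tile_eq.
  - right; right.
    exists (jB - n), (n - (p' - p - 1) + 1 - l0), (iL - n), (n - (q' - q - 1) + 1 - s0).
    split; [lia|]. split; [lia|]. split; [lia|]. split; [lia|]. tile_eq.
Qed.

Fixpoint find_up (f : Z -> bool) (a : Z) (fuel : nat) : Z :=
  match fuel with O => a | S fuel' => if f a then a else find_up f (a + 1) fuel' end.

Definition find_down (f : Z -> bool) (a : Z) (fuel : nat) : Z :=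
  - find_up (fun m => f (- m)) (- a) fuel.

Lemma find_up_spec f a fuel : (exists m, a <= m < a + Z.of_nat fuel /\ f m = true) ->
  a <= find_up f a fuel < a + Z.of_nat fuel /\ f (find_up f a fuel) = true /\
  forall m, a <= m < find_up f a fuel -> f m = false.
Proof.
  revert a. induction fuel as [|fuel IH]; intros a (m & Hm & Hfm); simpl in *; [lia|].
  destruct (f a) eqn:Ha.
  - split; [lia|]. split; [exact Ha|]. lia.
  - assert (Hm' : a + 1 <= m) by (destruct (Z.eq_dec a m); [congruence|lia]).
    destruct (IH (a + 1)) as (H1 & H2 & H3); [exists m; split; [lia|exact Hfm]|].
    split; [lia|]. split; [exact H2|]. intros m' Hm''.
    destruct (Z.eq_dec a m'); [congruence|]. apply H3. lia.
Qed.

Lemma find_down_spec f a fuel : (exists m, a - Z.of_nat fuel < m <= a /\ f m = true) ->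
  a - Z.of_nat fuel < find_down f a fuel <= a /\ f (find_down f a fuel) = true /\
  forall m, find_down f a fuel < m <= a -> f m = false.
Proof.
  intros (m & Hm & Hfm). unfold find_down.
  destruct (find_up_spec (fun m => f (- m)) (- a) fuel) as (H1 & H2 & H3).
  - exists (- m). rewrite Z.opp_involutive. split; [lia|exact Hfm].
  - split; [lia|]. split; [exact H2|]. intros m' Hm'.
    rewrite <- (Z.opp_involutive m'). apply H3. lia.
Qed.

Lemma find_up_shift f g c a fuel : (forall m, f (m + c) = g m) ->
  find_up f (a + c) fuel = find_up g a fuel + c.
Proof.
  intro Hfg. revert a. induction fuel as [|fuel IH]; intro a; simpl; [reflexivity|].
  rewrite Hfg. destruct (g a); [reflexivity|].
  replace (a + c + 1) with (a + 1 + c) by lia. apply IH.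
Qed.

Lemma find_down_shift f g c a fuel : (forall m, f (m + c) = g m) ->
  find_down f (a + c) fuel = find_down g a fuel + c.
Proof.
  intro Hfg. unfold find_down. replace (- (a + c)) with (- a + - c) by lia.
  rewrite (find_up_shift _ (fun m => g (- m))); [lia|].
  intro m. rewrite <- Hfg. f_equal. lia.
Qed.

Section BoundedGaps.
Variable f : Z -> bool.
Variable w : nat.

Definition next_true (m : Z) : Z := find_up f (m + 1) w.
Definition prev_true (m : Z) : Z := find_down f (m - 1) w.

(* [enum_true 0] is the least point of [f] that is >= 0. *)
Definition enum_true (i : Z) : Z :=
  if 0 <=? i then Nat.iter (Z.to_nat i) next_true (next_true (-1))
  else Nat.iter (Z.to_nat (- i)) prev_true (next_true (-1)).

Hypothesis gaps : forall m, exists m', m <= m' < m + Z.of_nat w /\ f m' = true.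

Lemma next_true_spec m :
  m < next_true m /\ f (next_true m) = true /\ forall m', m < m' < next_true m -> f m' = false.
Proof.
  unfold next_true. destruct (find_up_spec f (m + 1) w (gaps (m + 1))) as (H1 & H2 & H3).
  split; [lia|]. split; [exact H2|]. intros m' Hm'. apply H3. lia.
Qed.

Lemma prev_true_spec m :
  prev_true m < m /\ f (prev_true m) = true /\ forall m', prev_true m < m' < m -> f m' = false.
Proof.
  unfold prev_true. destruct (find_down_spec f (m - 1) w) as (H1 & H2 & H3).
  - destruct (gaps (m - Z.of_nat w)) as (m' & Hm' & Hf). exists m'. split; [lia|exact Hf].
  - split; [lia|]. split; [exact H2|]. intros m' Hm'. apply H3. lia.
Qed.

Lemma next_prev_true m : f m = true -> next_true (prev_true m) = m.
Proof.
  intro Hm. destruct (prev_true_spec m) as (H1 & _ & H3).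
  destruct (next_true_spec (prev_true m)) as (H4 & H5 & H6).
  destruct (Z.lt_total (next_true (prev_true m)) m) as [H|[H|H]]; [|exact H|].
  - rewrite H3 in H5 by lia. discriminate.
  - rewrite H6 in Hm by lia. discriminate.
Qed.

Lemma prev_next_true m : f m = true -> prev_true (next_true m) = m.
Proof.
  intro Hm. destruct (next_true_spec m) as (H1 & _ & H3).
  destruct (prev_true_spec (next_true m)) as (H4 & H5 & H6).
  destruct (Z.lt_total (prev_true (next_true m)) m) as [H|[H|H]]; [|exact H|].
  - rewrite H6 in Hm by lia. discriminate.
  - rewrite H3 in H5 by lia. discriminate.
Qed.

Lemma enum_true_true i : f (enum_true i) = true.
Proof.
  unfold enum_true. destruct (0 <=? i).
  - induction (Z.to_nat i); simpl; apply next_true_spec.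
  - induction (Z.to_nat (- i)); simpl; [apply next_true_spec|apply prev_true_spec].
Qed.

Lemma enum_true_succ i : enum_true (i + 1) = next_true (enum_true i).
Proof.
  unfold enum_true. destruct (Z.leb_spec 0 i) as [H|H].
  - rewrite (proj2 (Z.leb_le 0 (i + 1))), Z2Nat.inj_add by lia. simpl.
    now rewrite Nat.add_comm.
  - destruct (Z.leb_spec 0 (i + 1)) as [H'|H'].
    + replace i with (-1) by lia. simpl. rewrite next_prev_true; [reflexivity|apply next_true_spec].
    + replace (Z.to_nat (- i)) with (S (Z.to_nat (- (i + 1)))) by lia. simpl.
      rewrite next_prev_true; [reflexivity|].
      destruct (Z.to_nat (- (i + 1))); simpl; [apply next_true_spec|apply prev_true_spec].
Qed.

Lemma enum_true_pred i : enum_true (i - 1) = prev_true (enum_true i).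
Proof.
  replace (enum_true i) with (enum_true (i - 1 + 1)) by (f_equal; lia).
  rewrite enum_true_succ, prev_next_true; [reflexivity|apply enum_true_true].
Qed.

Lemma next_true_reach d : 0 <= d -> forall m0, f m0 = true -> f (m0 + d) = true ->
  exists k : nat, Nat.iter k next_true m0 = m0 + d /\ Z.of_nat k <= d /\
    ((exists c, m0 < c < m0 + d /\ f c = false) -> Z.of_nat k < d).
Proof.
  induction d as [d IH] using (well_founded_ind (Z.lt_wf 0)).
  intros Hd m0 Hm0 Hm1. destruct (Z.eq_dec d 0) as [->|Hd0].
  - exists O. rewrite Z.add_0_r. split; [reflexivity|]. split; [lia|]. intros (c & Hc & _). lia.
  - destruct (next_true_spec m0) as (H1 & H2 & H3).
    assert (Hle : next_true m0 <= m0 + d).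
    { destruct (Z_le_gt_dec (next_true m0) (m0 + d)) as [H|H]; [exact H|].
      rewrite H3 in Hm1 by lia. discriminate. }
    destruct (IH (m0 + d - next_true m0) ltac:(lia) ltac:(lia) (next_true m0) H2) as (k & K1 & K2 & K3).
    { now replace (next_true m0 + (m0 + d - next_true m0)) with (m0 + d) by lia. }
    exists (S k). rewrite Nat.iter_succ_r.
    replace (next_true m0 + (m0 + d - next_true m0)) with (m0 + d) in K1 by lia.
    split; [exact K1|]. split; [lia|]. intros (c & Hc & Hfc).
    destruct (Z.lt_total c (next_true m0)) as [E|[E|E]].
    + lia.
    + rewrite E in Hfc. congruence.
    + assert (Z.of_nat k < m0 + d - next_true m0); [|lia].
      apply K3. exists c. split; [lia|exact Hfc].
Qed.

Lemma next_true_shift a : (forall m, f (m + a) = f m) ->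
  forall m, next_true (m + a) = next_true m + a.
Proof.
  intros Ha m. unfold next_true. replace (m + a + 1) with (m + 1 + a) by lia.
  now apply find_up_shift.
Qed.

Lemma prev_true_shift a : (forall m, f (m + a) = f m) ->
  forall m, prev_true (m + a) = prev_true m + a.
Proof.
  intros Ha m. unfold prev_true. replace (m + a - 1) with (m - 1 + a) by lia.
  now apply find_down_shift.
Qed.

Lemma periodic_mul a : (forall m, f (m + a) = f m) -> forall t m, f (m + t * a) = f m.
Proof.
  intros Ha t m. induction t using Z.peano_ind.
  - now rewrite Z.mul_0_l, Z.add_0_r.
  - rewrite <- IHt, <- (Ha (m + t * a)). f_equal. lia.
  - rewrite <- IHt, <- (Ha (m + Z.pred t * a)). f_equal. lia.
Qed.

Lemma enum_true_period a : 0 < a -> (forall m, f (m + a) = f m) -> (exists m, f m = false) ->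
  exists k, 0 < k < a /\ forall i, enum_true (i + k) = enum_true i + a.
Proof.
  intros Hpos Ha [c Hc].
  set (p0 := enum_true 0).
  assert (Hp0 : f p0 = true) by apply enum_true_true.
  assert (Hp1 : f (p0 + a) = true) by now rewrite Ha.
  destruct (next_true_reach a ltac:(lia) p0 Hp0 Hp1) as (k & K1 & K2 & K3).
  set (c' := p0 + (c - p0) mod a).
  assert (Hc' : f c' = false).
  { rewrite <- Hc, <- (periodic_mul a Ha ((c - p0) / a) c'). f_equal.
    pose proof (Z.div_mod (c - p0) a ltac:(lia)). unfold c'. lia. }
  pose proof (Z.mod_pos_bound (c - p0) a Hpos).
  assert (Hk : Z.of_nat k < a).
  { apply K3. exists c'. split; [|exact Hc']. unfold c'. split; [|lia].
    destruct (Z.eq_dec ((c - p0) mod a) 0) as [E|E]; [|lia].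
    unfold c' in Hc'. rewrite E, Z.add_0_r in Hc'. congruence. }
  assert (Hk0 : k <> O) by (intros ->; simpl in K1; lia).
  exists (Z.of_nat k). split; [lia|].
  intro i. induction i using Z.peano_ind.
  - simpl. unfold enum_true at 1. rewrite (proj2 (Z.leb_le 0 (Z.of_nat k))) by lia.
    now rewrite Nat2Z.id.
  - rewrite <- Z.add_1_r. replace (i + 1 + Z.of_nat k) with (i + Z.of_nat k + 1) by lia.
    rewrite !enum_true_succ, IHi. now apply next_true_shift.
  - rewrite <- Z.sub_1_r. replace (i - 1 + Z.of_nat k) with (i + Z.of_nat k - 1) by lia.
    rewrite !enum_true_pred, IHi. now apply prev_true_shift.
Qed.

End BoundedGaps.

Definition kind0_col (x : config) (m : Z) : bool := col_kind x m =? 0.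

Definition kind0_enum (n : Z) (x : config) : Z -> Z := enum_true (kind0_col x) (Z.to_nat (n + 2)).

Lemma kind0_col_gaps n x : 1 <= n -> relaxed_valid n x ->
  forall m, exists m', m <= m' < m + Z.of_nat (Z.to_nat (n + 2)) /\ kind0_col x m' = true.
Proof.
  intros Hn Hx m. destruct (kind0_column_window n Hn x Hx m) as (m' & Hm' & H).
  exists m'. split; [lia|]. now apply Z.eqb_eq.
Qed.

Lemma kind0_enum_consecutive n x i : 1 <= n -> relaxed_valid n x ->
  consecutive_kind0 x (kind0_enum n x i) (kind0_enum n x (i + 1)).
Proof.
  intros Hn Hx. pose proof (kind0_col_gaps n x Hn Hx) as Hgaps.
  unfold kind0_enum. rewrite enum_true_succ by exact Hgaps.
  destruct (next_true_spec _ _ Hgaps (enum_true (kind0_col x) (Z.to_nat (n + 2)) i)) as (H1 & H2 & H3).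
  pose proof (enum_true_true _ _ Hgaps i) as H0. unfold kind0_col in *.
  split; [exact H1|]. split; [now apply Z.eqb_eq|]. split; [now apply Z.eqb_eq|].
  intros m Hm. specialize (H3 m Hm). apply Z.eqb_neq in H3.
  destruct (col_kind_01 n Hn x Hx m); [contradiction|assumption].
Qed.

Definition derived (n : Z) (x : config) : config := fun m =>
  let P := kind0_enum n x in let Q := kind0_enum n (transpose x) in
  derived_tile n x (P (fst m)) (P (fst m + 1)) (Q (snd m)) (Q (snd m + 1)).

Lemma derived_relaxed_valid n x : 1 <= n -> relaxed_valid n x -> relaxed_valid n (derived n x).
Proof.
  intros Hn Hx. split; [|split; reflexivity].
  intros [i j]. apply derived_tile_relaxed; [exact Hn|exact Hx|apply kind0_enum_consecutive; auto|].
  apply kind0_enum_consecutive; [exact Hn|apply relaxed_valid_transpose, Hx].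
Qed.

Lemma col_kind_derived n x i :
  col_kind (derived n x) i = n - (kind0_enum n x (i + 1) - kind0_enum n x i - 1).
Proof. reflexivity. Qed.

(* A period [a] of the column kinds of [x] induces a period [k < a] of the
   column kinds of the derived configuration. *)
Lemma col_kind_aperiodic a : 0 < a -> forall n x, 1 <= n -> relaxed_valid n x ->
  ~ (forall m, col_kind x (m + a) = col_kind x m).
Proof.
  intro Ha. induction a as [a IH] using (well_founded_ind (Z.lt_wf 0)).
  intros n x Hn Hx Hper.
  destruct (enum_true_period (kind0_col x) (Z.to_nat (n + 2)) (kind0_col_gaps n x Hn Hx) a Ha)
    as (k & Hk & Hshift).
  - intro m. unfold kind0_col. now rewrite Hper.
  - destruct (exists_kind1_column n Hn x Hx) as (m & Hm). exists m. unfold kind0_col. now rewrite Hm.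
  - apply (IH k ltac:(lia) ltac:(lia) n (derived n x) Hn (derived_relaxed_valid n x Hn Hx)).
    intro i. rewrite !col_kind_derived. replace (i + k + 1) with (i + 1 + k) by lia.
    unfold kind0_enum. rewrite !Hshift. lia.
Qed.

Lemma col_kind_not_periodic n x a : 1 <= n -> relaxed_valid n x -> a <> 0 ->
  ~ (forall m, col_kind x (m + a) = col_kind x m).
Proof.
  intros Hn Hx Ha Hper. destruct (Z_lt_le_dec 0 a).
  - exact (col_kind_aperiodic a ltac:(lia) n x Hn Hx Hper).
  - apply (col_kind_aperiodic (- a) ltac:(lia) n x Hn Hx).
    intro m. rewrite <- (Hper (m + - a)). f_equal. lia.
Qed.

Lemma relaxed_valid_not_periodic n x k : 1 <= n -> relaxed_valid n x -> k <> (0, 0) ->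
  Defs.shift k x <> x.
Proof.
  intros Hn Hx Hk Hper. destruct k as [a b].
  assert (Hxab : forall i j, x (i + a, j + b) = x (i, j)).
  { intros i j. change (Defs.shift (a, b) x (i, j) = x (i, j)). now rewrite Hper. }
  destruct (Z.eq_dec a 0) as [->|Ha].
  - apply (col_kind_not_periodic n (transpose x) b Hn (relaxed_valid_transpose n x Hx)).
    + intros ->. now apply Hk.
    + intro j. unfold col_kind, transpose; simpl. rewrite <- (Hxab 0 j). now rewrite Z.add_0_r.
  - apply (col_kind_not_periodic n x a Hn Hx Ha).
    intro m. rewrite <- (col_kind_const n x Hx (m + a) b). unfold col_kind. now rewrite <- (Hxab m 0).
Qed.

(* A label [L] of a tile is encoded along the corresponding side of its block:
   the counter of the side strip starts at [start_counter L], and the flags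
   switch from 0 to 1 at offset [switch_offset L]. *)
Definition switch_offset (L : label) : Z := v2 L - v0 L.
Definition start_counter (L : label) : Z := 1 - v1 L + v0 L.
Definition first_flag (L : label) : Z := if switch_offset L =? 0 then 1 else 0.

Definition side_strip (n : Z) (L : label) (o : Z) : tile :=
  strip_tile n (if switch_offset L <=? o then 1 else 0) (if switch_offset L <=? o + 1 then 1 else 0)
             (start_counter L + o).

Definition side_label (n : Z) (L : label) (o : Z) : label :=
  if o =? 0 then lab 0 (start_counter L) (first_flag L + n) else BOTTOM (side_strip n L (o - 1)).

Definition block_width (n : Z) (t : tile) : Z := n + 1 - v0 (BOTTOM t).
Definition block_height (n : Z) (t : tile) : Z := n + 1 - v0 (LEFT t).

Definition block (n : Z) (t : tile) (p q : Z) : tile :=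
  let B := BOTTOM t in let L := LEFT t in
  if p =? 0 then
    (if q =? 0 then junction n (first_flag B) (start_counter B) (first_flag L) (start_counter L)
     else hat (side_strip n L (q - 1)))
  else
    (if q =? 0 then side_strip n B (p - 1)
     else W_tile (1 + (if switch_offset L <=? q - 1 then 1 else 0) + (p - 1))
                 (1 + (if switch_offset B <=? p - 1 then 1 else 0) + (q - 1))).

Ltac decide_ifs :=
  repeat match goal with
  | |- context [?a =? ?b] => destruct (Z.eqb_spec a b)
  | |- context [?a <=? ?b] => destruct (Z.leb_spec a b)
  end; cbv beta iota in *.

Ltac unfold_blocks :=
  unfold side_label, block, side_strip, block_width, block_height, first_flag, start_counter,
    switch_offset in *; unfold_tiles.

Ltac destruct_in_T_nf H :=
  destruct H as [(i & j & ? & ? & ->)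
                | [(a & b & i & ? & ? & ? & [-> | ->])
                  | (k & l & r & s & ? & ? & ? & ? & ? & ? & ->)]].

Ltac solve_in_T_nf :=
  match goal with
  | |- in_T_nf ?n ((1, 1, _), (1, 1, _), (1, 1, ?i), (1, 1, ?j)) =>
      left; exists i, j; split; [lia|split; [lia|tile_eq]]
  | |- in_T_nf ?n ((0, ?b, _), (1, 1, _), (0, ?a, ?i), (1, 1, _)) =>
      right; left; exists a, b, i; split; [lia|split; [lia|split; [lia|left; tile_eq]]]
  | |- in_T_nf ?n ((1, 1, _), (0, ?b, _), (1, 1, _), (0, ?a, ?i)) =>
      right; left; exists a, b, i; split; [lia|split; [lia|split; [lia|right; tile_eq]]]
  | |- in_T_nf ?n ((0, ?k, ?l), (0, ?r, ?s), _, _) =>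
      right; right; exists k, l, r, s;
      split; [lia|split; [lia|split; [lia|split; [lia|split; [lia|split; [lia|tile_eq]]]]]]
  end.

Section Block.
Variable n : Z.
Hypothesis Hn : 1 <= n.
Variable t : tile.
Hypothesis Ht : in_T_nf n t.

Lemma block_in_T_nf p q : 0 <= p < block_width n t -> 0 <= q < block_height n t ->
  in_T_nf n (block n t p q).
Proof. intros Hp Hq. destruct_in_T_nf Ht; unfold_blocks; decide_ifs; solve_in_T_nf. Qed.

Lemma block_right_left p q : 0 <= p -> p + 1 < block_width n t -> 0 <= q < block_height n t ->
  RIGHT (block n t p q) = LEFT (block n t (p + 1) q).
Proof. intros Hp Hp' Hq. destruct_in_T_nf Ht; unfold_blocks; decide_ifs; tile_eq. Qed.

Lemma block_right_side q : 0 <= q < block_height n t ->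
  RIGHT (block n t (block_width n t - 1) q) = side_label n (RIGHT t) q.
Proof. intros Hq. destruct_in_T_nf Ht; unfold_blocks; decide_ifs; tile_eq. Qed.

End Block.

Lemma block_left_side n t q : LEFT (block n t 0 q) = side_label n (LEFT t) q.
Proof.
  unfold block, side_label. destruct (Z.eqb_spec q 0); simpl; [reflexivity|].
  now destruct (side_strip n (LEFT t) (q - 1)) as [[[? ?] ?] ?].
Qed.

Lemma block_hat n t p q : block n (hat t) q p = hat (block n t p q).
Proof.
  destruct t as [[[R T] L] B]. unfold block. cbn [BOTTOM LEFT hat].
  now destruct (q =? 0), (p =? 0).
Qed.

Lemma in_T_nf_hat n t : in_T_nf n t -> in_T_nf n (hat t).
Proof.
  intro H. destruct_in_T_nf H.
  - left. now exists j, i.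
  - right; left. exists a, b, i. auto.
  - right; left. exists a, b, i. rewrite hat_hat. auto.
  - right; right. exists r, s, k, l. repeat split; auto; lia.
Qed.

(* Position [i] of a row of blocks of widths [w 0], [w 1], ... lies in the block
   [fst (block_coords w i)] at offset [snd (block_coords w i)]. *)
Fixpoint block_coords (w : Z -> Z) (i : nat) : Z * Z :=
  match i with
  | O => (0, 0)
  | S i' => let (I, p) := block_coords w i' in if p + 1 <? w I then (I, p + 1) else (I + 1, 0)
  end.

Section BlockCoords.
Variable w : Z -> Z.
Hypothesis Hw : forall I, 1 <= w I.

Lemma block_coords_bounds i :
  0 <= fst (block_coords w i) <= Z.of_nat i /\
  0 <= snd (block_coords w i) < w (fst (block_coords w i)).
Proof.
  induction i as [|i IH]; simpl; [specialize (Hw 0); lia|].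
  destruct (block_coords w i) as [I p]. simpl in *.
  destruct (Z.ltb_spec (p + 1) (w I)); simpl; [lia|]. specialize (Hw (I + 1)). lia.
Qed.

Lemma block_coords_succ i : let (I, p) := block_coords w i in
  (block_coords w (S i) = (I, p + 1) /\ p + 1 < w I) \/
  (block_coords w (S i) = (I + 1, 0) /\ p + 1 = w I).
Proof.
  pose proof (block_coords_bounds i) as H. simpl. destruct (block_coords w i) as [I p]. simpl in H.
  destruct (Z.ltb_spec (p + 1) (w I)); [left|right]; split; auto; lia.
Qed.

Lemma block_coords_index_lt i : 2 <= w 0 -> (1 <= i)%nat ->
  fst (block_coords w i) <= Z.of_nat i - 1.
Proof.
  intros Hw0 Hi. induction i as [|[|i] IH]; [lia| |].
  - simpl. destruct (Z.ltb_spec 1 (w 0)); simpl; lia.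
  - specialize (IH ltac:(lia)). pose proof (block_coords_succ (S i)) as H.
    destruct (block_coords w (S i)) as [I p]. cbn [fst] in IH.
    destruct H as [[-> _]|[-> _]]; cbn [fst]; lia.
Qed.

End BlockCoords.

Definition valid_square (n : Z) (y : config) (a b : Z) : Prop :=
  (forall i j, a <= i < b -> a <= j < b -> in_T n (y (i, j))) /\
  (forall i j, a <= i -> i + 1 < b -> a <= j < b -> RIGHT (y (i, j)) = LEFT (y (i + 1, j))) /\
  (forall i j, a <= i < b -> a <= j -> j + 1 < b -> TOP (y (i, j)) = BOTTOM (y (i, j + 1))).

Lemma valid_square_transpose n y a b : valid_square n y a b -> valid_square n (transpose y) a b.
Proof.
  intros (Ht & Hh & Hv). unfold transpose. split; [|split]; intros i j; simpl.
  - intros. apply in_T_nf_iff, in_T_nf_hat, in_T_nf_iff, Ht; lia.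
  - intros. rewrite RIGHT_hat, LEFT_hat. apply Hv; lia.
  - intros. rewrite TOP_hat, BOTTOM_hat. apply Hh; lia.
Qed.

Definition col_width (n : Z) (y : config) (I : Z) : Z :=
  if v0 (BOTTOM (y (I, 0))) =? 0 then n + 1 else n.
Definition row_height (n : Z) (y : config) (J : Z) : Z := col_width n (transpose y) J.

Definition substitute (n : Z) (y : config) : config := fun m =>
  let (I, p) := block_coords (col_width n y) (Z.to_nat (fst m)) in
  let (J, q) := block_coords (row_height n y) (Z.to_nat (snd m)) in
  block n (y (I, J)) p q.

Lemma substitute_transpose n y : substitute n (transpose y) = transpose (substitute n y).
Proof.
  apply functional_extensionality. intros [i j]. unfold substitute.
  change (row_height n (transpose y)) with (col_width n (transpose (transpose y))).
  rewrite transpose_involutive.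
  change (col_width n (transpose y)) with (row_height n y).
  unfold transpose; simpl.
  destruct (block_coords (row_height n y) (Z.to_nat i)) as [I p].
  destruct (block_coords (col_width n y) (Z.to_nat j)) as [J q].
  apply block_hat.
Qed.

Section Substitution.
Variable n : Z.
Hypothesis Hn : 1 <= n.
Variable y : config.
Variable N : Z.
Hypothesis HN : 0 < N.
Hypothesis Hy : valid_square n y 0 N.
Hypothesis Hy00 : v0 (BOTTOM (y (0, 0))) = 0.

Lemma bottom_kind_const I J : 0 <= I < N -> 0 <= J < N ->
  v0 (BOTTOM (y (I, J))) = v0 (BOTTOM (y (I, 0))).
Proof.
  intros HI HJ. destruct Hy as (Ht & _ & Hv).
  replace J with (Z.of_nat (Z.to_nat J)) in * by lia.
  induction (Z.to_nat J) as [|J' IH]; [reflexivity|].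
  rewrite Nat2Z.inj_succ, <- Z.add_1_r, <- (Hv I (Z.of_nat J')) by lia. rewrite <- IH by lia.
  apply (relaxed_tile_kinds n), in_T_relaxed, Ht; lia.
Qed.

Lemma col_width_pos I : 1 <= col_width n y I.
Proof. unfold col_width. destruct (_ =? 0); lia. Qed.

Lemma col_width_block_width I J : 0 <= I < N -> 0 <= J < N ->
  col_width n y I = block_width n (y (I, J)).
Proof.
  intros HI HJ. unfold col_width, block_width. rewrite <- (bottom_kind_const I J HI HJ).
  pose proof (relaxed_tile_in_V n _ Hn (in_T_relaxed n _ (proj1 Hy I J HI HJ))) as (_ & _ & _ & HB).
  apply in_V_bounds in HB. destruct (Z.eqb_spec (v0 (BOTTOM (y (I, J)))) 0); lia.
Qed.

(* The block of [y (0, 0)] has width [n + 1 >= 2], so the first [N + 1]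
   positions of the substituted row lie in the first [N] blocks. *)
Lemma block_index_in_square i : 0 <= i < N + 1 ->
  0 <= fst (block_coords (col_width n y) (Z.to_nat i)) < N.
Proof.
  intro Hi. pose proof (block_coords_bounds _ col_width_pos (Z.to_nat i)).
  destruct (Z.eq_dec i 0) as [->|Hi0]; [simpl; lia|].
  assert (Hw0 : 2 <= col_width n y 0) by (unfold col_width; rewrite Hy00; simpl; lia).
  pose proof (block_coords_index_lt _ col_width_pos (Z.to_nat i) Hw0 ltac:(lia)). lia.
Qed.

End Substitution.

Section SubstitutionValid.
Variable n : Z.
Hypothesis Hn : 1 <= n.
Variable y : config.
Variable N : Z.
Hypothesis HN : 0 < N.
Hypothesis Hy : valid_square n y 0 N.
Hypothesis Hy00 : v0 (BOTTOM (y (0, 0))) = 0 /\ v0 (LEFT (y (0, 0))) = 0.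

Let Hy' : valid_square n (transpose y) 0 N := valid_square_transpose n y 0 N Hy.

Lemma row_height_block_height I J : 0 <= I < N -> 0 <= J < N ->
  row_height n y J = block_height n (y (I, J)).
Proof.
  intros HI HJ. unfold row_height.
  rewrite (col_width_block_width n Hn (transpose y) N Hy' J I) by lia.
  unfold block_width, block_height, transpose; simpl. now rewrite BOTTOM_hat.
Qed.

Lemma row_index_in_square j : 0 <= j < N + 1 ->
  0 <= fst (block_coords (row_height n y) (Z.to_nat j)) < N.
Proof.
  apply (block_index_in_square n Hn (transpose y) N HN). unfold transpose; simpl.
  rewrite BOTTOM_hat. apply Hy00.
Qed.

Lemma col_index_in_square i : 0 <= i < N + 1 ->
  0 <= fst (block_coords (col_width n y) (Z.to_nat i)) < N.
Proof. apply (block_index_in_square n Hn y N HN), Hy00. Qed.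

Lemma substitute_in_T i j : 0 <= i < N + 1 -> 0 <= j < N + 1 -> in_T n (substitute n y (i, j)).
Proof.
  intros Hi Hj. pose proof (col_index_in_square i Hi). pose proof (row_index_in_square j Hj).
  pose proof (block_coords_bounds _ (col_width_pos n Hn y) (Z.to_nat i)).
  pose proof (block_coords_bounds (row_height n y) (col_width_pos n Hn (transpose y)) (Z.to_nat j)).
  unfold substitute; simpl.
  destruct (block_coords (col_width n y) (Z.to_nat i)) as [I p].
  destruct (block_coords (row_height n y) (Z.to_nat j)) as [J q]. simpl in *.
  apply in_T_nf_iff, (block_in_T_nf n Hn); [apply in_T_nf_iff, Hy; lia| |].
  - rewrite <- (col_width_block_width n Hn y N Hy I J) by lia. lia.
  - rewrite <- (row_height_block_height I J) by lia. lia.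
Qed.

Lemma substitute_right_left i j : 0 <= i -> i + 1 < N + 1 -> 0 <= j < N + 1 ->
  RIGHT (substitute n y (i, j)) = LEFT (substitute n y (i + 1, j)).
Proof.
  intros Hi Hi' Hj. pose proof (col_index_in_square i ltac:(lia)) as HI.
  pose proof (col_index_in_square (i + 1) ltac:(lia)) as HI'. pose proof (row_index_in_square j Hj).
  pose proof (block_coords_bounds _ (col_width_pos n Hn y) (Z.to_nat i)).
  pose proof (block_coords_bounds (row_height n y) (col_width_pos n Hn (transpose y)) (Z.to_nat j)).
  pose proof (block_coords_succ _ (col_width_pos n Hn y) (Z.to_nat i)) as Hsucc.
  unfold substitute; cbn [fst snd]. replace (Z.to_nat (i + 1)) with (S (Z.to_nat i)) in * by lia.
  destruct (block_coords (col_width n y) (Z.to_nat i)) as [I p].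
  destruct (block_coords (row_height n y) (Z.to_nat j)) as [J q]. cbn [fst snd] in *.
  destruct Hsucc as [[E Hp]|[E Hp]]; rewrite E in *; cbn [fst snd] in *;
    rewrite (row_height_block_height I J), (col_width_block_width n Hn y N Hy I J) in * by lia.
  - apply (block_right_left n Hn); [apply in_T_nf_iff, Hy|..]; lia.
  - rewrite block_left_side, <- (proj1 (proj2 Hy) I J) by lia.
    replace p with (block_width n (y (I, J)) - 1) by lia.
    apply (block_right_side n Hn); [apply in_T_nf_iff, Hy|]; lia.
Qed.

End SubstitutionValid.

Lemma substitute_valid_square n y N : 1 <= n -> 0 < N -> valid_square n y 0 N ->
  v0 (BOTTOM (y (0, 0))) = 0 /\ v0 (LEFT (y (0, 0))) = 0 ->
  valid_square n (substitute n y) 0 (N + 1).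
Proof.
  intros Hn HN Hy Hy00. split; [|split].
  - intros i j Hi Hj. now apply (substitute_in_T n Hn y N).
  - intros i j Hi Hi' Hj. now apply (substitute_right_left n Hn y N).
  - intros i j Hi Hj Hj'.
    assert (Hy00' : v0 (BOTTOM (transpose y (0, 0))) = 0 /\ v0 (LEFT (transpose y (0, 0))) = 0).
    { unfold transpose; simpl. rewrite BOTTOM_hat, LEFT_hat. tauto. }
    pose proof (substitute_right_left n Hn (transpose y) N HN (valid_square_transpose n y 0 N Hy)
                  Hy00' j i Hj Hj' Hi) as H.
    rewrite substitute_transpose in H. unfold transpose in H; simpl in H.
    now rewrite RIGHT_hat, LEFT_hat in H.
Qed.

Definition iter_substitute (n : Z) (k : nat) : config :=
  Nat.iter k (substitute n) (fun _ => junction n 0 0 0 0).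

Lemma iter_substitute_valid n k : 1 <= n ->
  valid_square n (iter_substitute n k) 0 (Z.of_nat k + 1) /\
  v0 (BOTTOM (iter_substitute n k (0, 0))) = 0 /\ v0 (LEFT (iter_substitute n k (0, 0))) = 0.
Proof.
  intro Hn. induction k as [|k (IH & IH00)].
  - split; [|split; reflexivity]. split; [|split]; [|intros; lia..].
    intros i j _ _. apply in_T_nf_iff. right; right. exists 0, 0, 0, 0. repeat split; lia.
  - split; [|split; reflexivity]. unfold iter_substitute. rewrite Nat.iter_succ.
    replace (Z.of_nat (S k) + 1) with (Z.of_nat k + 1 + 1) by lia.
    apply substitute_valid_square; auto; lia.
Qed.

Lemma valid_square_shift n y a b c : valid_square n y a b ->
  valid_square n (fun m => y (fst m + c, snd m + c)) (a - c) (b - c).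
Proof.
  intros (Ht & Hh & Hv). split; [|split]; intros i j; simpl; intros.
  - apply Ht; lia.
  - replace (i + 1 + c) with (i + c + 1) by lia. apply Hh; lia.
  - replace (j + 1 + c) with (j + c + 1) by lia. apply Hv; lia.
Qed.

Lemma exists_valid_square n M : 1 <= n -> 0 <= M -> exists z, valid_square n z (- M) (M + 1).
Proof.
  intros Hn HM. destruct (iter_substitute_valid n (Z.to_nat (2 * M)) Hn) as (H & _).
  exists (fun m => iter_substitute n (Z.to_nat (2 * M)) (fst m + M, snd m + M)).
  replace (- M) with (0 - M) by lia.
  replace (M + 1) with (Z.of_nat (Z.to_nat (2 * M)) + 1 - M) by lia.
  now apply valid_square_shift.
Qed.

Lemma valid_square_mono n z a b a' b' : valid_square n z a b -> a <= a' -> b' <= b ->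
  valid_square n z a' b'.
Proof. intros (Ht & Hh & Hv) Ha Hb. split; [|split]; intros; [apply Ht|apply Hh|apply Hv]; lia. Qed.

Definition V_list (n : Z) : list label :=
  list_prod (list_prod [0; 1] [0; 1]) (map Z.of_nat (seq 0 (Z.to_nat (n + 2)))).

Definition tile_list (n : Z) : list tile :=
  list_prod (list_prod (list_prod (V_list n) (V_list n)) (V_list n)) (V_list n).

Lemma in_V_V_list n L : in_V n L -> In L (V_list n).
Proof.
  destruct L as [[a b] c]. unfold in_V. intro H. unfold V_list.
  apply in_prod; [apply in_prod|]; simpl; [lia|lia|].
  apply in_map_iff. exists (Z.to_nat c). split; [lia|]. apply in_seq. lia.
Qed.

Lemma in_T_tile_list n t : 1 <= n -> in_T n t -> In t (tile_list n).
Proof.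
  intros Hn Ht. destruct (relaxed_tile_in_V n t Hn (in_T_relaxed n t Ht)) as (HR & HT & HL & HB).
  destruct t as [[[R T] L] B]. unfold tile_list.
  repeat apply in_prod; apply in_V_V_list; assumption.
Qed.

Definition Z_code (z : Z) : nat := Z.to_nat (if 0 <=? z then 2 * z else - 2 * z - 1).
Definition pos_code (m : Z * Z) : nat := Cantor.to_nat (Z_code (fst m), Z_code (snd m)).

Lemma Z_code_inj z z' : Z_code z = Z_code z' -> z = z'.
Proof. unfold Z_code. destruct (Z.leb_spec 0 z), (Z.leb_spec 0 z'); lia. Qed.

Lemma pos_code_inj m m' : pos_code m = pos_code m' -> m = m'.
Proof.
  intro H. apply (f_equal Cantor.of_nat) in H. unfold pos_code in H.
  rewrite !Cantor.cancel_of_to in H.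
  destruct m, m'. injection H as H1 H2. apply Z_code_inj in H1, H2. now subst.
Qed.

(* König's lemma: the positions are fixed one at a time, in the order of
   [pos_code], keeping every finite window extensible to patches of all sizes. *)
Section Compactness.
Variable A : Type.
Variable alphabet : list A.
Variable patch : Z -> (Z * Z -> A) -> Prop.
Hypothesis patch_mono : forall M M' z, M' <= M -> patch M z -> patch M' z.
Hypothesis patch_alphabet : forall m, exists M, forall z, patch M z -> In (z m) alphabet.
Hypothesis patch_exists : forall M, exists z, patch M z.

Definition extensible (f : Z * Z -> A) (K : nat) : Prop :=
  forall M, exists z, patch M z /\ forall m, (pos_code m < K)%nat -> z m = f m.

Definition update (f : Z * Z -> A) (K : nat) (a : A) : Z * Z -> A :=
  fun m => if Nat.eqb (pos_code m) K then a else f m.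

Lemma uniform_bound (Q : A -> Z -> Prop) (l : list A) :
  (forall a M M', Q a M -> M <= M' -> Q a M') ->
  (forall a, In a l -> exists M, Q a M) -> exists M, forall a, In a l -> Q a M.
Proof.
  intros Hmono. induction l as [|a l IH]; intro H; [now exists 0|].
  destruct (H a (or_introl eq_refl)) as (M1 & H1).
  destruct IH as (M2 & H2); [intros; apply H; now right|].
  exists (Z.max M1 M2). intros b [<-|Hb]; [apply (Hmono _ M1)|apply (Hmono _ M2)]; auto; lia.
Qed.

(* If every choice at the position coded [K] failed at some size, the largest
   of these sizes would contradict extensibility. *)
Lemma extensible_update f K : extensible f K -> exists a, extensible (update f K a) (S K).
Proof.
  intro Hf. destruct (classic (exists m, pos_code m = K)) as [(m0 & Hm0)|Hno].
  2: { exists (f (0, 0)). intro M. destruct (Hf M) as (z & Hz & Hagree).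
       exists z. split; [exact Hz|].
       intros m Hm. unfold update. destruct (Nat.eqb_spec (pos_code m) K); [exfalso; eauto|].
       apply Hagree. lia. }
  apply NNPP. intro Hnone.
  set (fails a M :=
         forall z, patch M z -> ~ forall m, (pos_code m < S K)%nat -> z m = update f K a m).
  destruct (uniform_bound fails alphabet) as (M & HM).
  - intros a M M' Ha HMM' z Hz. apply Ha, (patch_mono M'); assumption.
  - intros a _. apply NNPP. intro Hall. apply Hnone. exists a. intro M. apply NNPP. intro HnoM.
    apply Hall. exists M. intros z Hz Hagree. apply HnoM. now exists z.
  - destruct (patch_alphabet m0) as (M0 & HM0).
    destruct (Hf (Z.max M M0)) as (z & Hz & Hagree).
    apply (HM (z m0) (HM0 z (patch_mono (Z.max M M0) M0 z ltac:(lia) Hz)) z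
              (patch_mono (Z.max M M0) M z ltac:(lia) Hz)).
    intros m Hm. unfold update. destruct (Nat.eqb_spec (pos_code m) K) as [E|E].
    + f_equal. apply pos_code_inj. congruence.
    + apply Hagree. lia.
Qed.

Lemma extension_exists f K : exists a, extensible f K -> extensible (update f K a) (S K).
Proof.
  destruct (classic (extensible f K)) as [Hf|Hf].
  - destruct (extensible_update f K Hf) as (a & Ha). now exists a.
  - exists (f (0, 0)). now intro.
Qed.

Definition extension (f : Z * Z -> A) (K : nat) : A :=
  proj1_sig (constructive_indefinite_description _ (extension_exists f K)).

Fixpoint approx (K : nat) : Z * Z -> A :=
  match K with
  | O => proj1_sig (constructive_indefinite_description _ (patch_exists 0))
  | S K' => update (approx K') K' (extension (approx K') K')
  end.

Lemma approx_extensible K : extensible (approx K) K.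
Proof.
  induction K as [|K IH].
  - intro M. destruct (patch_exists M) as (z & Hz). exists z. split; [exact Hz|]. lia.
  - simpl. unfold extension. destruct (constructive_indefinite_description _ _) as (a & Ha).
    exact (Ha IH).
Qed.

Lemma approx_stable m K : (pos_code m < K)%nat -> approx K m = approx (S (pos_code m)) m.
Proof.
  induction K as [|K IH]; intro Hm; [lia|].
  destruct (Nat.eq_dec (pos_code m) K) as [<-|HK]; [reflexivity|].
  simpl. unfold update at 1. destruct (Nat.eqb_spec (pos_code m) K); [contradiction|].
  apply IH. lia.
Qed.

Definition limit (m : Z * Z) : A := approx (S (pos_code m)) m.

Lemma limit_windows (ms : list (Z * Z)) M :
  exists z, patch M z /\ forall m, In m ms -> z m = limit m.
Proof.
  set (K := S (list_max (map pos_code ms))).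
  destruct (approx_extensible K M) as (z & Hz & Hagree). exists z. split; [exact Hz|].
  intros m Hm. assert (HmK : (pos_code m < K)%nat).
  { unfold K. enough (pos_code m <= list_max (map pos_code ms))%nat by lia.
    pose proof (proj1 (list_max_le (map pos_code ms) _) (le_n _)) as H.
    rewrite Forall_forall in H. apply H, in_map, Hm. }
  rewrite Hagree by exact HmK. now apply approx_stable.
Qed.

End Compactness.

Lemma exists_valid n : 1 <= n -> exists x, valid n x.
Proof.
  intro Hn. set (patch M z := valid_square n z (- M) (M + 1)).
  assert (Hmono : forall M M' z, M' <= M -> patch M z -> patch M' z)
    by (intros M M' z HM Hz; apply (valid_square_mono n z (- M) (M + 1)); [exact Hz|lia..]).
  assert (Halphabet : forall m, exists M, forall z, patch M z -> In (z m) (tile_list n)).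
  { intros [i j]. exists (Z.abs i + Z.abs j). intros z Hz.
    apply (in_T_tile_list n _ Hn), Hz; lia. }
  assert (Hexists : forall M, exists z, patch M z).
  { intro M. destruct (exists_valid_square n (Z.max M 0) Hn ltac:(lia)) as (z & Hz).
    exists z. apply (valid_square_mono n z (- Z.max M 0) (Z.max M 0 + 1)); [exact Hz|lia..]. }
  exists (limit tile (tile_list n) patch Hmono Halphabet Hexists). split.
  - intros [i j].
    destruct (limit_windows _ _ _ Hmono Halphabet Hexists [(i, j)] (Z.abs i + Z.abs j))
      as (z & Hz & Hagree).
    rewrite <- Hagree by now left. apply Hz; lia.
  - intros i j.
    destruct (limit_windows _ _ _ Hmono Halphabet Hexists [(i, j); (i + 1, j); (i, j + 1)]
                (Z.abs i + Z.abs j + 1)) as (z & Hz & Hagree).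
    rewrite <- !Hagree by (simpl; tauto). destruct Hz as (_ & Hh & Hv).
    split; [apply Hh|apply Hv]; lia.
Qed.

Theorem corollaryB : forall n : Z, 1 <= n -> aperiodic n.
Proof.
  intros n Hn. split; [now apply exists_valid|].
  intros x k Hx. apply (relaxed_valid_not_periodic n x k Hn), valid_relaxed, Hx.
Qed.
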